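(* Let $R\in\mathfrak{U}$ and $\mathfrak{U}'\subseteq\mathfrak{U}$, and suppose that either $\mathfrak{U}'=\mathfrak{U}$, or $R\in\mathfrak{C}_o$ and $\mathfrak{C}_o\subseteq\mathfrak{U}'\subseteq\mathfrak{U}$. Then for every $S\in\mathfrak{U}$, the following are equivalent: - $R\sqsubseteq_\Gamma S$ with respect to $\mathfrak{U}'$; - $\#\mathcal{S}_u(G,R)\le\#\mathcal{S}_u(G,S)$ for all $G\in\mathfrak{U}'$. Moreover, the latter condition implies $\#\mathcal{H}_u(G,R)\le\#\mathcal{H}_u(G,S)$ for all $G\in\mathfrak{U}'$.
   Context: **Undirected graphs.** - An undirected graph $G$ consists of a finite non-empty vertex set $V(G)$ and an edge set $E(G)$ of subsets of $V(G)$ of size 1 or 2. One-element edges are loops. - $G^*$ is $G$ with all loops removed. - $\mathfrak{U}$ is the class of undirected graphs. - A homomorphism $\zeta:G\to H$ is a map $V(G)\to V(H)$ with $\{\zeta(v),\zeta(w)\}\in E(H)$ for every $\{v,w\}\in E(G)$. $\mathcal{H}_u(G,H)$ is the set of homomorphisms. - $\mathcal{S}_u(G,H)=\mathcal{H}_u(G,H)\cap\mathcal{H}_u(G^*,H^* )$ is the set of strict homomorphisms, i.e. those mapping every two-element edge to a two-element edge. - $\mathfrak{C}_o=\{G\in\mathfrak{U}:G^*\text{ contains no cycle of odd length}\}$. **Connectivity.** - $v,w$ are adjacent if $v\neq w$ and $\{v,w\}\in E(G)$. - For $X\subseteq V(G)$ and $v,w\in X$, the vertices $v$ and $w$ are connected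 in $X$ if $v=w$, or if there are $z_0=v,\dots,z_I=w$ in $X$ with consecutive terms adjacent. - $\gamma_X(v)$ is the set of such $w$. - $\Gamma_\zeta(v)=\gamma_{\zeta^{-1}(\zeta(v))}(v)$. **Schemes.** - $\mathfrak{U}'_r$ is a fixed system of representatives of $\mathfrak{U}'$ up to isomorphism. - $R\sqsubseteq_\Gamma S$ with respect to $\mathfrak{U}'$ means there exist injective maps $\rho_G:\mathcal{H}_u(G,R)\to\mathcal{H}_u(G,S)$, $G\in\mathfrak{U}'_r$, with $\Gamma_{\rho_G(\zeta)}(v)=\Gamma_\zeta(v)$ for all $G$, $\zeta$ and $v$. *)

From mathcomp Require Import all_boot.
Unset Printing Implicit Defensive.

(* An undirected graph: finite non-empty vertex type, edges given by a
   symmetric relation; [gE v v] means the loop {v} is an edge, and for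
   v <> w, [gE v w] means the 2-element edge {v,w} is present. *)
Record ugraph := UGraph {
  gV : finType;
  gE : rel gV;
  gE_sym : symmetric gE;
  gV_nonempty : 0 < #|gV|
}.
Arguments gE : clear implicits.
Arguments gE_sym : clear implicits.
Arguments gV_nonempty : clear implicits.

Definition star_rel (G : ugraph) : rel (gV G) := fun v w => (v != w) && gE G v w.

Lemma star_sym (G : ugraph) : symmetric (star_rel G).
Proof. by move=> v w; rewrite /star_rel eq_sym (gE_sym G). Qed.

Definition gstar (G : ugraph) : ugraph := @UGraph (gV G) (star_rel G) (@star_sym G) (gV_nonempty G).

Definition is_hom (G H : ugraph) (f : {ffun gV G -> gV H}) : bool :=
  [forall v, forall w, gE G v w ==> gE H (f v) (f w)].

Definition Hu (G H : ugraph) : {set {ffun gV G -> gV H}} := [set f | is_hom G H f].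

Definition Su (G H : ugraph) : {set {ffun gV G -> gV H}} :=
  [set f | is_hom G H f && is_hom (gstar G) (gstar H) f].

Definition in_Co (G : ugraph) : Prop :=
  ~ exists s : seq (gV G),
      [&& 3 <= size s, odd (size s), uniq s & cycle (star_rel G) s].

Definition adj_in (G : ugraph) (X : {set gV G}) : rel (gV G) :=
  fun a b => [&& a \in X, b \in X & star_rel G a b].

Definition gammaX (G : ugraph) (X : {set gV G}) (v : gV G) : {set gV G} :=
  [set w | connect (adj_in G X) v w].

Definition GammaF (G H : ugraph) (z : {ffun gV G -> gV H}) (v : gV G) : {set gV G} :=
  gammaX G [set u | z u == z v] v.

Definition sqsubG (U' : ugraph -> Prop) (R S : ugraph) : Prop :=
  forall G : ugraph, U' G ->
    exists rho : {ffun gV G -> gV R} -> {ffun gV G -> gV S},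
      {in Hu G R &, injective rho} /\
      forall z, z \in Hu G R ->
        rho z \in Hu G S /\ forall v, GammaF G S (rho z) v = GammaF G R z v.

From mathcomp Require Import all_boot zify.

(* For a homomorphism z : G -> H, the sets Gamma_z(v) partition V(G) into
   connected pieces of the fibres of z; call this partition the Gamma-partition
   of z.  The key fact is a quotient construction: given any map z0 on V(G),
   contracting every block of its Gamma-partition to a point yields a graph
   G/z0 such that, for every H, restriction to block representatives is a
   bijection between the homomorphisms G -> H with the same Gamma-partition as
   z0 and the strict homomorphisms G/z0 -> H.  Hence, block by block,
     #{z in H_u(G,R) | Gamma_z = g} = #S_u(G/z0, R) <= #S_u(G/z0, S)
                                  = #{z in H_u(G,S) | Gamma_z = g},
   provided G/z0 lies in U'; in the C_o case this holds because G/z0 maps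
   strictly to R and strict homomorphisms pull back the absence of odd cycles.
   A general counting lemma turns these blockwise inequalities into an
   injection preserving Gamma-partitions, i.e. R is below S for Gamma.
   Conversely strict homomorphisms are exactly the homomorphisms with
   singleton Gamma-sets, so a Gamma-preserving injection restricts to them;
   and the injection itself compares the numbers of all homomorphisms. *)

Lemma card_le_inj (T U : finType) (f : T -> U) (A : {set T}) (B : {set U}) :
  {in A &, injective f} -> (forall x, x \in A -> f x \in B) -> #|A| <= #|B|.
Proof.
move=> finj fAB; rewrite -(card_in_imset finj); apply: subset_leq_card.
by apply/subsetP => _ /imsetP[x hx ->]; apply: fAB.
Qed.

Lemma connect_from_ind (T : finType) (e : rel T) (v : T) (P : T -> Prop) :
  P v -> (forall a b, connect e v a -> e a b -> P a -> P b) ->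
  forall w, connect e v w -> P w.
Proof.
move=> Pv step w /connectP [p]; elim/last_ind: p w => [|p x IH] w /=.
  by move=> _ ->.
rewrite rcons_path last_rcons => /andP[hp he] ->.
apply: (step (last v p)) => //; last exact: IH hp erefl.
by apply/connectP; exists p.
Qed.

Lemma adj_in_sym (G : ugraph) (X : {set gV G}) : symmetric (adj_in G X).
Proof. by move=> a b; rewrite /adj_in star_sym; case: (a \in X); case: (b \in X). Qed.

Lemma connect_adj_in_mem (G : ugraph) (X : {set gV G}) v w :
  connect (adj_in G X) v w -> v \in X -> w \in X.
Proof. by move=> hvw hv; move: w hvw; apply: connect_from_ind => // a b _ /and3P[]. Qed.

Lemma homP (G H : ugraph) (f : {ffun gV G -> gV H}) v w :
  is_hom G H f -> gE G v w -> gE H (f v) (f w).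
Proof. by move/forallP/(_ v)/forallP/(_ w)/implyP. Qed.
Arguments homP {G H f v w}.

Lemma Su_Hu {G H : ugraph} {z : {ffun gV G -> gV H}} : z \in Su G H -> z \in Hu G H.
Proof. by rewrite !inE => /andP[]. Qed.

Section GammaSets.
Variables (G H : ugraph) (z : {ffun gV G -> gV H}).
Local Notation Gam := (GammaF G H z).

Lemma GammaF_refl v : v \in Gam v.
Proof. by rewrite inE connect0. Qed.

Lemma GammaF_fibre {v w} : w \in Gam v -> z w = z v.
Proof.
rewrite inE => /connect_adj_in_mem.
by rewrite inE eqxx => /(_ isT); rewrite inE => /eqP.
Qed.

Lemma GammaF_block v w : w \in Gam v -> Gam w = Gam v.
Proof.
move=> hw; have hf := GammaF_fibre hw.
move: hw; rewrite /GammaF /gammaX inE.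
have -> : [set u | z u == z w] = [set u | z u == z v].
  by apply/setP => u; rewrite !inE hf.
move=> hvw; apply/setP => u; rewrite !inE; apply/idP/idP; first exact: connect_trans.
by apply: connect_trans; rewrite (sym_connect_sym (@adj_in_sym G _)).
Qed.

Lemma GammaF_connected v w : w \in Gam v -> connect (adj_in G (Gam v)) v w.
Proof.
rewrite {1}/GammaF /gammaX inE; move: w.
apply: connect_from_ind => // a b hva hab /connect_trans; apply.
apply: connect1; case/and3P: (hab) => _ _ hst; rewrite /adj_in hst.
by rewrite !andbT !inE hva (connect_trans hva (connect1 hab)).
Qed.

Lemma Su_GammaF1 v : z \in Su G H -> Gam v = [set v].
Proof.
rewrite inE => /andP[_ hs].
apply/setP => w; rewrite inE; apply/idP/idP; last by move/eqP->; exact: GammaF_refl.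
rewrite inE; move: w; apply: connect_from_ind => // a b _.
rewrite /adj_in !inE => /and3P[/eqP ha /eqP hb hst] /eqP hav.
by have := homP hs hst; rewrite /= /star_rel ha hb eqxx.
Qed.

Lemma GammaF1_Su : z \in Hu G H -> (forall v, Gam v = [set v]) -> z \in Su G H.
Proof.
rewrite !inE => hz hG; rewrite hz /=.
apply/forallP => v; apply/forallP => w; apply/implyP.
rewrite /= /star_rel => /andP[hvw he]; rewrite (homP hz he) andbT.
apply/negP => /eqP hzz.
have : w \in Gam v.
  by rewrite inE connect1 // /adj_in !inE eqxx hzz eqxx /star_rel hvw he.
by rewrite hG inE eq_sym (negbTE hvw).
Qed.

End GammaSets.
Arguments GammaF_fibre {G H z v w}.
Arguments GammaF_block {G H z v w}.

Definition gamma_part (G H : ugraph) (z : {ffun gV G -> gV H}) :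
  {ffun gV G -> {set gV G}} := [ffun v => GammaF G H z v].
Arguments gamma_part {G H}.

Lemma gamma_partE {G H H' : ugraph} {z : {ffun gV G -> gV H}} {z' : {ffun gV G -> gV H'}} :
  gamma_part z = gamma_part z' -> forall v, GammaF G H z v = GammaF G H' z' v.
Proof. by move=> /ffunP h v; have := h v; rewrite !ffunE. Qed.

Definition Hu_part (G H : ugraph) (g : {ffun gV G -> {set gV G}}) :
  {set {ffun gV G -> gV H}} := [set z in Hu G H | gamma_part z == g].
Arguments Hu_part {G}.

Section Quotient.
Variables (G H0 : ugraph) (z0 : {ffun gV G -> gV H0}).
Local Notation Gam := (GammaF G H0 z0).

Definition rep (v : gV G) : gV G := odflt v [pick x in Gam v].

Lemma pick_rep v : [pick x in Gam v] = Some (rep v).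
Proof. by rewrite /rep; case: pickP => [//|/(_ v)]; rewrite /= GammaF_refl. Qed.

Lemma rep_in v : rep v \in Gam v.
Proof. by have := pick_rep v; case: pickP => // x hx [<-]. Qed.

Lemma rep_eq {v w} : Gam v = Gam w -> rep v = rep w.
Proof. by move=> h; have := pick_rep v; rewrite h pick_rep => -[]. Qed.

Lemma rep_block v w : rep v = rep w -> Gam v = Gam w.
Proof. by move=> h; rewrite -(GammaF_block (rep_in v)) h (GammaF_block (rep_in w)). Qed.

Lemma rep_idem v : rep (rep v) == rep v.
Proof. by rewrite (rep_eq (GammaF_block (rep_in v))). Qed.

Definition quot_V : finType := {x : gV G | rep x == x}.

Definition toQ (v : gV G) : quot_V := exist _ (rep v) (rep_idem v).

Lemma toQ_val (a : quot_V) : toQ (val a) = a.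
Proof. by apply: val_inj; rewrite /= (eqP (valP a)). Qed.

Definition quot_E : rel quot_V := fun a b =>
  [exists x, exists y, [&& rep x == val a, rep y == val b & gE G x y]].

Lemma quot_E_sym : symmetric quot_E.
Proof.
suff h : forall a b, quot_E a b -> quot_E b a by move=> a b; apply/idP/idP; apply: h.
move=> a b /existsP[x /existsP[y /and3P[h1 h2 h3]]].
by apply/existsP; exists y; apply/existsP; exists x; rewrite h1 h2 gE_sym h3.
Qed.

Lemma quot_V_nonempty : 0 < #|quot_V|.
Proof. by case/card_gt0P: (gV_nonempty G) => v _; apply/card_gt0P; exists (toQ v). Qed.

Definition quot : ugraph := @UGraph quot_V quot_E quot_E_sym quot_V_nonempty.

Lemma quot_E_toQ v w : gE G v w -> quot_E (toQ v) (toQ w).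
Proof. by move=> h; apply/existsP; exists v; apply/existsP; exists w; rewrite !eqxx h. Qed.

Variable H : ugraph.

Definition resQ (z : {ffun gV G -> gV H}) : {ffun gV quot -> gV H} :=
  [ffun a => z (val a)].

Definition extQ (f : {ffun gV quot -> gV H}) : {ffun gV G -> gV H} :=
  [ffun v => f (toQ v)].

Lemma part_rep {z : {ffun gV G -> gV H}} :
  gamma_part z = gamma_part z0 -> forall v, z (rep v) = z v.
Proof. by move=> hz v; apply: GammaF_fibre; rewrite (gamma_partE hz) rep_in. Qed.

Lemma resQ_strict z : z \in Hu_part H (gamma_part z0) -> resQ z \in Su quot H.
Proof.
rewrite !inE => /andP[hz /eqP hk].
apply/andP; split; apply/forallP=> a; apply/forallP=> b; apply/implyP.
  case/existsP=> x /existsP [y /and3P[/eqP hx /eqP hy he]].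
  by rewrite !ffunE -hx -hy !(part_rep hk) (homP hz he).
rewrite /= /star_rel => /andP[hab /existsP[x /existsP[y /and3P[/eqP hx /eqP hy he]]]].
rewrite !ffunE -hx -hy !(part_rep hk) (homP hz he) andbT.
apply/negP => /eqP hxy.
have hxy' : x != y.
  by apply: contraNneq hab => exy; rewrite -(toQ_val a) -(toQ_val b) -hx -hy exy.
have : y \in GammaF G H z x.
  by rewrite inE connect1 // /adj_in !inE eqxx hxy eqxx /star_rel hxy' he.
rewrite (gamma_partE hk) => /GammaF_block /rep_eq.
by rewrite hx hy => /val_inj eab; rewrite eab eqxx in hab.
Qed.

Lemma resQ_inj : {in Hu_part H (gamma_part z0) &, injective resQ}.
Proof.
move=> z1 z2; rewrite !inE => /andP[_ /eqP h1] /andP[_ /eqP h2] heq.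
apply/ffunP => v; rewrite -(part_rep h1) -(part_rep h2).
by move/ffunP/(_ (toQ v)): heq; rewrite !ffunE.
Qed.

Lemma extQ_hom f : f \in Su quot H -> extQ f \in Hu G H.
Proof.
rewrite !inE => /andP[hf _]; apply/forallP => v; apply/forallP => w; apply/implyP => he.
by rewrite !ffunE; apply: (homP hf); apply: quot_E_toQ.
Qed.

(* Strictness of f is what keeps the Gamma-sets of extQ f from merging
   adjacent blocks. *)
Lemma extQ_part f : f \in Su quot H -> gamma_part (extQ f) = gamma_part z0.
Proof.
rewrite inE => /andP[_ hs]; apply/ffunP => v; rewrite !ffunE.
apply/setP => w; rewrite inE; apply/idP/idP.
  move=> hc; suff <- : Gam w = Gam v by apply: GammaF_refl.
  move: w hc; apply: connect_from_ind => // a b _.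
  rewrite /adj_in !inE => /and3P[/eqP ha /eqP hb /andP[hab he]] <-.
  apply: rep_block; case: (eqVneq (toQ a) (toQ b)) => [/(congr1 val) // | ne].
  have hq : star_rel quot (toQ a) (toQ b) by rewrite /star_rel ne; apply: quot_E_toQ.
  have := homP hs hq; rewrite /= /star_rel => /andP[].
  by move: ha hb; rewrite !ffunE => -> ->; rewrite eqxx.
have toQ_block u : u \in Gam v -> toQ u = toQ v.
  by move=> hu; apply: val_inj; apply: rep_eq; apply: GammaF_block.
move/GammaF_connected; move: w; apply: connect_from_ind => // a b _ hab.
move/connect_trans; apply; apply: connect1.
case/and3P: hab => ha hb hst; rewrite /adj_in hst andbT !inE !ffunE.
by rewrite (toQ_block _ ha) (toQ_block _ hb) eqxx.
Qed.

Lemma extQ_inj : {in Su quot H &, injective extQ}.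
Proof.
move=> f1 f2 _ _ heq; apply/ffunP => a.
by move/ffunP/(_ (val a)): heq; rewrite !ffunE toQ_val.
Qed.

Lemma card_Hu_part_quot : #|Hu_part H (gamma_part z0)| = #|Su quot H|.
Proof.
apply/eqP; rewrite eqn_leq; apply/andP; split.
  exact: card_le_inj resQ_inj resQ_strict.
apply: card_le_inj extQ_inj _ => f hf.
by rewrite inE extQ_hom //= extQ_part.
Qed.

End Quotient.
Arguments quot {G H0}.
Arguments resQ_strict {G H0 z0 H z}.
Arguments card_Hu_part_quot {G H0} z0 H.

Lemma odd_closed_walk_cycle (T : eqType) (e : rel T) :
  (forall x, ~~ e x x) -> forall s, odd (size s) -> cycle e s ->
  exists s', [&& 3 <= size s', odd (size s'), uniq s' & cycle e s'].
Proof.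
move=> irr s; have [n] := ubnP (size s); elim: n s => // n IHn s hsz hodd hc.
case hu: (uniq s).
  exists s; rewrite hodd hu hc /= andbT.
  case: s hodd hc {hsz hu} => [|x [|y [|z t]]] //=.
  by rewrite andbT (negbTE (irr x)).
have [x0 _] : exists x0 : T, true by case: s hodd {hsz hc hu} => // x _ _; exists x.
(* Split the walk at a repeated vertex into two shorter closed walks, one of
   which has odd length. *)
move/negbT: hu => /(uniqPn x0) [i [j [hij hj heq]]].
have hct : cycle e (rot i s) by rewrite rot_cycle.
have hst : size (rot i s) = size s by rewrite size_rot.
have nth_rot k : k < size s - i -> nth x0 (rot i s) k = nth x0 s (i + k).
  by move=> hk; rewrite /rot nth_cat size_drop hk nth_drop.
have h0 := nth_rot 0 ltac:(lia); have h1 := nth_rot (j - i) ltac:(lia).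
rewrite addn0 in h0; rewrite (_ : i + (j - i) = j) in h1; last by lia.
move: hct hst h0 h1; case: (rot i s) => [|x t'] /=; first by lia.
move=> hct hst h0 h1.
rewrite (_ : j - i = (j - i - 1).+1) /= in h1; last by lia.
set k := j - i - 1 in h1; have hk : k < size t' by lia.
move: hct; rewrite -(cat_take_drop k t') (drop_nth x0 hk) h1 -heq -h0.
set a := take k t'; set b := drop k.+1 t' => hct.
have [hca hcb] : cycle e (x :: a) /\ cycle e (x :: b).
  move: hct; rewrite /= rcons_cat /= cat_path /= => /and3P[h1' h2' h3'].
  by rewrite /= rcons_path h1' h2' h3'.
have hsize : size (x :: a) + size (x :: b) = size s.
  by rewrite -hst /= size_take hk size_drop; lia.
case ho: (odd (size (x :: a))).
  by apply: (IHn (x :: a)) => //=; move: hsize => /= ?; lia.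
apply: (IHn (x :: b)) => //; first by move: hsize => /= ?; lia.
by move: hodd; rewrite -hsize oddD ho.
Qed.

Lemma Co_strict_preimage {G H : ugraph} {f : {ffun gV G -> gV H}} :
  f \in Su G H -> in_Co H -> in_Co G.
Proof.
rewrite inE => /andP[_ hs] coH [s /and4P[_ hodd _ hc]]; apply: coH.
have hm : cycle (star_rel H) (map f s).
  by apply: homo_cycle hc => a b; apply: (homP hs).
have irr x : ~~ star_rel H x x by rewrite /star_rel eqxx.
have hodd' : odd (size (map f s)) by rewrite size_map.
by have [s' hs'] := @odd_closed_walk_cycle _ _ irr _ hodd' hm; exists s'.
Qed.

Lemma card_Hu_part_le {R S : ugraph} {U' : ugraph -> Prop}
  (hU : (forall G, U' G) \/ (in_Co R /\ (forall G, in_Co G -> U' G)))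
  (hc : forall G, U' G -> #|Su G R| <= #|Su G S|) (G : ugraph)
  (g : {ffun gV G -> {set gV G}}) :
  #|Hu_part R g| <= #|Hu_part S g|.
Proof.
have [-> | [z0 hz0]] := set_0Vmem (Hu_part R g); first by rewrite cards0.
have hg : gamma_part z0 = g by move: hz0; rewrite inE => /andP[_ /eqP].
rewrite -hg in hz0 *.
have UQ : U' (quot z0).
  case: hU => [hall | [coR hCo]]; first exact: hall.
  by apply: hCo (Co_strict_preimage (resQ_strict hz0) coR).
by rewrite !card_Hu_part_quot hc.
Qed.

Lemma fibrewise_injection {T U K : finType} {kT : T -> K} {kU : U -> K}
    {A : {set T}} {B : {set U}} (y0 : U) :
  (forall g, #|[set x in A | kT x == g]| <= #|[set y in B | kU y == g]|) ->
  exists rho : T -> U, {in A &, injective rho} /\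
    forall x, x \in A -> rho x \in B /\ kU (rho x) = kT x.
Proof.
move=> hc.
pose AT g := enum [set x in A | kT x == g].
pose BU g := enum [set y in B | kU y == g].
pose rho x := nth y0 (BU (kT x)) (index x (AT (kT x))).
have hin x : x \in A -> index x (AT (kT x)) < size (BU (kT x)).
  move=> hx; apply: leq_trans (_ : size (AT (kT x)) <= _).
    by rewrite index_mem mem_enum inE hx eqxx.
  by rewrite -!cardE hc.
have hB x : x \in A -> rho x \in [set y in B | kU y == kT x].
  by move=> hx; rewrite -mem_enum mem_nth // hin.
have hrho x : x \in A -> rho x \in B /\ kU (rho x) = kT x.
  by move/hB; rewrite inE => /andP[-> /eqP].
exists rho; split=> // x1 x2 h1 h2 heq.
have hk : kT x1 = kT x2 by rewrite -(hrho x1 h1).2 heq (hrho x2 h2).2.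
move: heq; rewrite /rho hk => /eqP; rewrite nth_uniq ?enum_uniq ?hin //; last first.
  by rewrite -hk hin.
have m1 : x1 \in AT (kT x2) by rewrite mem_enum inE h1 hk eqxx.
by move/eqP/(congr1 (nth x1 (AT (kT x2)))); rewrite !nth_index // mem_enum inE h2 eqxx.
Qed.

Lemma card_Su_sqsubG (R S : ugraph) (U' : ugraph -> Prop)
  (hU : (forall G, U' G) \/ (in_Co R /\ (forall G, in_Co G -> U' G))) :
  (forall G, U' G -> #|Su G R| <= #|Su G S|) -> sqsubG U' R S.
Proof.
move=> hc G _; case/card_gt0P: (gV_nonempty S) => s0 _.
have [rho [hinj hp]] := fibrewise_injection [ffun _ => s0] (card_Hu_part_le hU hc G).
exists rho; split => // z hz; have [hb hk] := hp z hz.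
by split; [exact: hb | exact: gamma_partE hk].
Qed.

Lemma sqsubG_card_Su (R S : ugraph) (U' : ugraph -> Prop) :
  sqsubG U' R S -> forall G, U' G -> #|Su G R| <= #|Su G S|.
Proof.
move=> hsq G UG; have [rho [hinj hp]] := hsq G UG.
apply: (@card_le_inj _ _ rho) => [x y hx hy | z hz]; first by apply: hinj; apply: Su_Hu.
have [hb hG] := hp z (Su_Hu hz).
by apply: GammaF1_Su => // v; rewrite hG; apply: Su_GammaF1.
Qed.

Lemma sqsubG_card_Hu (R S : ugraph) (U' : ugraph -> Prop) :
  sqsubG U' R S -> forall G, U' G -> #|Hu G R| <= #|Hu G S|.
Proof.
move=> hsq G UG; have [rho [hinj hp]] := hsq G UG.
by apply: card_le_inj hinj _ => z /hp[].
Qed.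

Theorem theorem4 (R : ugraph) (U' : ugraph -> Prop)
  (hU : (forall G, U' G) \/ (in_Co R /\ (forall G, in_Co G -> U' G))) :
  forall S : ugraph,
    (sqsubG U' R S <-> (forall G, U' G -> #|Su G R| <= #|Su G S|)) /\
    ((forall G, U' G -> #|Su G R| <= #|Su G S|) ->
       forall G, U' G -> #|Hu G R| <= #|Hu G S|).
Proof.
move=> S; split; first by split; [apply: sqsubG_card_Su | apply: card_Su_sqsubG].
by move=> hc; apply: sqsubG_card_Hu; apply: card_Su_sqsubG hU hc.
Qed.
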